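(* Let $p=\phi(n)/n$, where $\phi$ is a function with $\phi(n)=o(n)$ and $\phi(n)\to\infty$ as $n\to\infty$. Then the average complexity $\mathbb{T}(n,p)$ of exhaustive search for maximum independent set on $G\sim\mathcal{G}(n,p)$ is subexponential in $n$ and satisfies $$\mathbb{T}(n,p)=O\left(\exp\left(n\cdot\frac{2\ln\phi(n)+\ln^2\phi(n)}{2\phi(n)}\right)\right).$$
   Context: $\mathcal{G}(n,p)$ is the binomial random graph on $n$ vertices in which each of the $\binom{n}{2}$ pairs of vertices is an edge with probability $p$, independently. Exhaustive search processes the vertices in a fixed order $v_1,\dots,v_n$ and builds a binary search tree: a node at level $i$ corresponds to a subset $P\subseteq\{v_1,\dots,v_i\}$, and it has the two children $P\cup\{v_{i+1}\}$ and $P$ at level $i+1$; a node is kept (and expanded) only if its subset is an independent set of $G$. $\mathbb{T}(n,p)$ denotes the expected number of nodes of this search tree when $G\sim\mathcal{G}(n,p)$. *)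

From HB Require Import structures.
From mathcomp Require Import all_boot all_order all_algebra.
From mathcomp Require Import all_classical all_reals all_analysis.
Set Implicit Arguments. Unset Strict Implicit. Unset Printing Implicit Defensive.
Import Order.TTheory GRing.Theory Num.Theory.
Local Open Scope ring_scope.

(* Potential edges of a graph on vertex set 'I_n: pairs (u,v) with u < v. *)
Definition vpair (n : nat) := {e : 'I_n * 'I_n | (e.1 < e.2)%N}.

Definition graph (n : nat) := {set vpair n}.

Definition gnp_prob (R : realType) (n : nat) (p : R) (E : graph n) : R :=
  p ^+ #|E| * (1 - p) ^+ #|~: E|.

Definition indep (n : nat) (E : graph n) (P : {set 'I_n}) : bool :=
  [forall e in E, ~~ (((val e).1 \in P) && ((val e).2 \in P))].

(* Vertices v_1..v_i, i.e. the ordinals below i. *)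
Definition prefix (n i : nat) : {set 'I_n} := [set v : 'I_n | (v < i)%N].

(* Number of nodes of the exhaustive-search tree for graph E:
   nodes at level i (0 <= i <= n) are the independent subsets of {v_1..v_i}. *)
Definition search_tree_size (n : nat) (E : graph n) : nat :=
  \sum_(i < n.+1) #|[set P : {set 'I_n} | (P \subset prefix n i) && indep E P]|.

Definition T (R : realType) (n : nat) (p : R) : R :=
  \sum_(E : graph n) gnp_prob p E * (search_tree_size E)%:R.

From Pilot Require Import Defs.
From HB Require Import structures.
From mathcomp Require Import all_boot all_order all_algebra.
From mathcomp Require Import all_classical all_reals all_analysis.
From mathcomp Require Import zify ring lra.
Import Order.TTheory GRing.Theory Num.Theory.
Local Open Scope ring_scope.
Set Implicit Arguments. Unset Strict Implicit. Unset Printing Implicit Defensive.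

(* Summing over the levels of the search tree and over the graphs gives
   T(n,p) = sum_i sum_{P subset {v_1..v_i}} (1-p)^C(|P|,2), since a fixed set P
   is independent with probability (1-p)^C(|P|,2). Hence
   1 <= T(n,p) <= (n+1) sum_k C(n,k) exp(-p k(k-1)/2).
   Write L = ln phi and c = p k. Using C(n,k) <= (e n / k)^k, p times the
   exponent of the k-th summand, enlarged by 2 ln (n+1), is at most
   c (1 + L - ln c) - c^2/2 + O(L), which is at most L + L^2/2 once L is large.
   So each summand is at most exp(n (2L + L^2) / (2 phi)) / (n+1)^2, which gives
   the bound. Finally phi = e^L >= L^3/6 makes (2L + L^2) / (2 phi) <= 9/L,
   which tends to 0: the growth is subexponential. *)

Lemma ffact_leq_expn (n k : nat) : (n ^_ k <= n ^ k)%N.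
Proof.
rewrite ffact_prod -[in leqRHS](card_ord k) -prod_nat_const.
by apply: leq_prod => i _; exact: leq_subr.
Qed.

Lemma sum_set_prod (R : comPzSemiRingType) (T : finType) (F : T -> bool -> R) :
  \sum_(E : {set T}) \prod_(v : T) F v (v \in E) =
  \prod_(v : T) (F v true + F v false).
Proof.
transitivity (\prod_(v : T) \sum_(b : bool) F v b); last first.
  by apply: eq_bigr => v _; rewrite big_bool.
rewrite bigA_distr_bigA /=; apply/esym.
rewrite (reindex (fun f : {ffun T -> bool} => [set x | f x]%SET)) /=.
  by apply: eq_bigr => f _; apply: eq_bigr => v _; rewrite inE.
exists (fun E : {set T} => [ffun x => x \in E]) => [f _|E _].
  by apply/ffunP => x; rewrite ffunE inE.
by apply/setP => x; rewrite inE ffunE.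
Qed.

Lemma sum_set_card (R : pzSemiRingType) (n : nat) (g : nat -> R) :
  \sum_(P : {set 'I_n}) g #|P| = \sum_(k < n.+1) 'C(n, k)%:R * g k.
Proof.
rewrite (partition_big (fun P : {set 'I_n} => (inord #|P| : 'I_n.+1)) xpredT) //=.
apply: eq_bigr => k _.
rewrite (eq_bigl (fun P : {set 'I_n} => #|P| == k)); last first.
  move=> P /=; have cP : (#|P| < n.+1)%N by rewrite ltnS -[leqRHS](card_ord n) max_card.
  by apply/eqP/eqP => [<-|h]; [rewrite inordK | apply: val_inj; rewrite /= inordK].
rewrite (eq_bigr (fun _ => g k)); last by move=> P /eqP ->.
rewrite sumr_const mulr_natl; congr (_ *+ _).
have := card_draws 'I_n k; rewrite card_ord => <-.
by apply: eq_card => P; rewrite inE.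
Qed.

Definition pairs_in (n : nat) (P : {set 'I_n}) : {set vpair n} :=
  [set e : vpair n | ((val e).1 \in P) && ((val e).2 \in P)].

Lemma card_pairs_in (n : nat) (P : {set 'I_n}) : #|pairs_in P| = 'C(#|P|, 2).
Proof.
pose X := finset.setX P P.
pose Lt := [set x : 'I_n * 'I_n | (x.1 < x.2)%N].
pose Gt := [set x : 'I_n * 'I_n | (x.2 < x.1)%N].
have cardLt : #|X :&: Lt| = #|pairs_in P|.
  rewrite -(card_imset _ val_inj); apply: eq_card => x.
  rewrite !inE; apply/andP/imsetP.
    case=> /andP [x1 x2] lt; exists (exist _ x lt) => //.
    by rewrite inE /= x1 x2.
  by case=> e; rewrite inE => /andP [e1 e2] ->; split; [apply/andP|exact: (valP e)].
have cardGt : #|(X :\: Lt) :&: Gt| = #|pairs_in P|.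
  pose swap (x : 'I_n * 'I_n) := (x.2, x.1).
  have swapK : involutive swap by case.
  rewrite -cardLt -(card_preimset _ (inv_inj swapK)); apply: eq_card => -[a b].
  rewrite !inE /=; apply/idP/idP.
    by case/andP => /and3P[_ h1 h2] h3; rewrite h1 h2 h3.
  by case/andP => /andP[h1 h2] h3; rewrite h1 h2 h3 (leq_gtF (ltnW h3)).
have cardDiag : #|(X :\: Lt) :\: Gt| = #|P|.
  have diag_inj : injective (fun x : 'I_n => (x, x)) by move=> x y [].
  rewrite -(card_imset P diag_inj); apply: eq_card => -[a b].
  apply/idP/imsetP.
    rewrite !inE /= -!leqNgt => /andP[ba /andP [ab /andP [aP _]]].
    have eab : a = b by apply/val_inj/eqP; rewrite eqn_leq ab ba.
    by subst b; exists a.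
  by case=> x xP [-> ->]; rewrite !inE /= ltnn xP.
have twice : (#|pairs_in P| * 2 + #|P| = #|P| * #|P|)%N.
  have := cardsID Gt (X :\: Lt); have := cardsID Lt X.
  by rewrite cardsX cardLt cardGt cardDiag => <- <-; lia.
have := mul_bin_diag #|P| 1; rewrite bin1.
move: twice; case: #|P| => [|m] /=; nia.
Qed.

Lemma bin2_natr (R : numFieldType) (m : nat) :
  'C(m, 2)%:R = m%:R * (m%:R - 1) / 2 :> R.
Proof.
case: m => [|m]; first by rewrite !mul0r.
apply: (@mulIf _ 2); first by rewrite pnatr_eq0.
rewrite divfK ?pnatr_eq0 // -natrM mulnC -mul_bin_diag bin1.
by rewrite natrM -natr1 addrK.
Qed.

Section ExpectedTreeSize.
Variable R : realType.

Lemma gnp_prob_indep (n : nat) (p : R) (P : {set 'I_n}) :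
  \sum_(E : graph n) gnp_prob p E * (indep E P)%:R = (1 - p) ^+ #|pairs_in P|.
Proof.
pose F (e : vpair n) (b : bool) : R :=
  if b then (if e \in pairs_in P then 0 else p) else 1 - p.
transitivity (\sum_(E : graph n) \prod_(e : vpair n) F e (e \in E)).
  apply: eq_bigr => E _.
  have [iE|niE] := boolP (indep E P); last first.
    rewrite mulr0; apply/esym/eqP; rewrite prodf_seq_eq0; apply/hasP.
    move: niE => /forall_inPn [e eE he]; exists e; first by rewrite mem_index_enum.
    by rewrite /= /F eE inE; move: he; rewrite negbK => ->.
  rewrite mulr1 /gnp_prob (bigID (mem E)) /=; congr (_ * _).
    rewrite (eq_bigr (fun _ => p)) ?prodr_const // => e eE; rewrite /F eE.
    move/forall_inP: iE => /(_ e eE); rewrite inE.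
    by move/negbTE => ->.
  rewrite (eq_bigr (fun _ => 1 - p)); last by move=> e /negbTE eE; rewrite /F eE.
  by rewrite prodr_const; congr (_ ^+ _); apply: eq_card => e; rewrite !inE.
rewrite sum_set_prod (eq_bigr (fun e => if e \in pairs_in P then 1 - p else 1)).
  by rewrite -big_mkcond /= prodr_const.
by move=> e _; rewrite /F; case: ifP => _; rewrite ?add0r // addrC subrK.
Qed.

Lemma T_sum_levels (n : nat) (p : R) :
  T n p = \sum_(i < n.+1) \sum_(P : {set 'I_n} | P \subset Defs.prefix n i)
            (1 - p) ^+ #|pairs_in P|.
Proof.
rewrite /T /search_tree_size.
under eq_bigr do rewrite natr_sum mulr_sumr.
rewrite exchange_big /=; apply: eq_bigr => i _.
transitivity (\sum_(E : graph n) \sum_(P : {set 'I_n} | P \subset Defs.prefix n i)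
                gnp_prob p E * (indep E P)%:R).
  apply: eq_bigr => E _; rewrite -mulr_sumr -sum1_card natr_sum; congr (_ * _).
  rewrite [RHS](eq_bigr (fun P => if indep E P then 1 else 0)); last by move=> P _; case: (indep E P).
  by rewrite -big_mkcondr /=; apply: eq_bigl => P; rewrite inE.
by rewrite exchange_big /=; apply: eq_bigr => P _; exact: gnp_prob_indep.
Qed.

Lemma T_ge1 (n : nat) (p : R) : 0 <= p <= 1 -> 1 <= T n p.
Proof.
case/andP=> _ p1; have q0 : 0 <= 1 - p by rewrite subr_ge0.
rewrite T_sum_levels (bigD1 ord0) //= (bigD1 finset.set0) ?sub0set //=.
rewrite card_pairs_in cards0 expr0 -addrA lerDl.
by apply: addr_ge0; do ?apply: sumr_ge0 => *; exact: exprn_ge0.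
Qed.

Lemma T_le_binomial_sum (n : nat) (p : R) : 0 <= p <= 1 ->
  T n p <= n.+1%:R * \sum_(k < n.+1) 'C(n, k)%:R * expR (- (p * (k%:R * (k%:R - 1) / 2))).
Proof.
case/andP=> p0 p1; have q0 : 0 <= 1 - p by rewrite subr_ge0.
rewrite T_sum_levels.
apply: (@le_trans _ _ (\sum_(i < n.+1) \sum_(P : {set 'I_n}) (1 - p) ^+ #|pairs_in P|)).
  apply: ler_sum => i _; rewrite big_mkcond /=; apply: ler_sum => P _.
  by case: ifP => // _; exact: exprn_ge0.
rewrite sumr_const card_ord -[leLHS]mulr_natl ler_wpM2l //.
rewrite -(@sum_set_card _ n (fun k => expR (- (p * (k%:R * (k%:R - 1) / 2))))).
apply: ler_sum => P _; rewrite -bin2_natr -card_pairs_in.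
apply: (@le_trans _ _ (expR (- p) ^+ #|pairs_in P|)).
  by apply: lerXn2r; rewrite ?nnegrE ?expR_ge0 // -[leLHS]/(1 + - p) expR_ge1Dx.
by rewrite -expRM_natl mulrN mulrC.
Qed.

End ExpectedTreeSize.

Local Open Scope classical_set_scope.

Section Asymptotics.
Variable R : realType.

Lemma pow_le_expR_fact (k : nat) :
  (k%:R : R) ^+ k <= expR k%:R * k`!%:R.
Proof.
case: k => [|k]; first by rewrite expr0 expR0 mul1r.
rewrite -ler_pdivrMr ?ltr0n ?fact_gt0 //.
by apply: le_trans (expR_ge1Dxn k (ler0n R k.+1)); rewrite lerDr.
Qed.

Lemma binomial_le_expR (n k : nat) : (0 < n)%N ->
  ('C(n, k)%:R : R) <= expR (k%:R * (ln n%:R + 1 - ln k%:R)).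
Proof.
move=> n0; case: k => [|k]; first by rewrite bin0 mul0r expR0.
rewrite mulrBr mulrDr mulr1 expRB expRD !expRM_natl !lnK ?posrE ?ltr0n //.
rewrite ler_pdivlMr ?exprn_gt0 ?ltr0n //.
apply: le_trans (_ : 'C(n, k.+1)%:R * (expR k.+1%:R * k.+1`!%:R) <= _).
  by rewrite ler_wpM2l ?ler0n ?pow_le_expR_fact.
rewrite mulrCA mulrC ler_wpM2r ?expR_ge0 // -natrM bin_ffact -natrX ler_nat.
exact: ffact_leq_expn.
Qed.

Lemma xlnx_le_expR (a c : R) : 0 < c -> c * (a - ln c) <= expR (a - 1).
Proof.
move=> c0; rewrite mulrC -ler_pdivlMr //.
have y1 : -1 < expR (a - 1) / c - 1 by rewrite ltrBrDr addNr divr_gt0 ?expR_gt0.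
have := le_ln1Dx y1; rewrite addrC subrK ln_div ?posrE ?expR_gt0 // expRK.
lra.
Qed.

(* With c = k p and L = ln (p n), the left side bounds p times the exponent of
   the k-th summand of [T_le_binomial_sum] (see [term_exponent_le]). The
   threshold on L serves both cases of the proof: for c <= L/2 it bounds
   c (3/2 - ln c) <= e^(1/2) by L/2, and for c > L/2 it forces ln c >= 4. *)
Lemma scaled_exponent_le (L c p : R) : p <= 1 -> 0 <= c -> 2 * expR 4 + 20 <= L ->
  c * (1 + L - ln c) - c ^+ 2 / 2 + p * c / 2 + 2 * L + 4 <= L + L ^+ 2 / 2.
Proof.
move=> p1 c0 hL.
have e4 : 0 < expR (4 : R) by apply: expR_gt0.
have pc : p * c <= c by rewrite ler_piMl.
suff : c * (3 / 2 - ln c) + 4 + L <= (c - L) ^+ 2 / 2.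
  have -> : c * (1 + L - ln c) = c * (3 / 2 - ln c) + c * L - c / 2 by field.
  lra.
have [cs|cl] := leP c (L / 2).
  have small : c * (3 / 2 - ln c) <= L / 2.
    have [->|cpos] := eqVneq c 0; first by rewrite mul0r; lra.
    apply: le_trans (@xlnx_le_expR (3 / 2) c _) _; first by rewrite lt_neqAle eq_sym cpos.
    have : expR (3 / 2 - 1 : R) <= expR 4 by rewrite ler_expR; lra.
    lra.
  have : (L / 2) ^+ 2 <= (L - c) ^+ 2 by apply: lerXn2r; rewrite ?nnegrE; lra.
  have : 20 * L <= L ^+ 2 by rewrite expr2 ler_wpM2r //; lra.
  have -> : (c - L) ^+ 2 = (L - c) ^+ 2 by ring.
  have -> : (L / 2) ^+ 2 = L ^+ 2 / 4 by field.
  lra.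
have lnc : 4 <= ln c by rewrite -[leLHS]expRK ler_ln ?posrE; lra.
have : c * (3 / 2 - ln c) <= c * (- 5 / 2) by rewrite ler_pM2l; lra.
have : 0 <= (c - L) ^+ 2 / 2 by rewrite divr_ge0 ?sqr_ge0.
lra.
Qed.

Lemma term_exponent_le (n k : nat) (p : R) : (0 < n)%N -> 0 < p <= 1 ->
  2 * expR 4 + 20 <= ln (p * n%:R) ->
  p * (k%:R * (ln n%:R + 1 - ln k%:R) - p * (k%:R * (k%:R - 1) / 2) + 2 * ln n.+1%:R)
    <= ln (p * n%:R) + ln (p * n%:R) ^+ 2 / 2.
Proof.
move=> n0 /andP [p0 p1]; set L := ln (p * n%:R) => hL.
have n0' : (0 : R) < n%:R by rewrite ltr0n.
have L0 : 0 <= L by have := expR_gt0 (4 : R); lra.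
have lnL : L = ln p + ln n%:R by rewrite /L lnM ?posrE.
have ln_succ : ln n.+1%:R <= ln n%:R + 1 :> R.
  rewrite -ler_expR expRD !lnK ?posrE ?ltr0n //.
  have : 1 + 1 <= expR 1 :> R by apply: expR_ge1Dx.
  have : 1 <= n%:R :> R by rewrite ler1n.
  rewrite -natr1; nra.
have p_ln_n : p * ln n%:R <= L + 1.
  have := @xlnx_le_expR 0 p p0; rewrite !sub0r.
  have : expR (- 1 : R) <= 1 by rewrite expR_le1; lra.
  have : p * L <= L by rewrite ler_piMl.
  rewrite lnL; nra.
set c := k%:R * p.
have c0 : 0 <= c by rewrite mulr_ge0 ?ler0n // ltW.
have hk : p * (k%:R * (ln n%:R - ln k%:R)) = c * (L - ln c).
  case: k @c {c0} => [|k] c; first by rewrite /c !mul0r mulr0.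
  by rewrite /c lnM ?posrE ?ltr0n // lnL; ring.
have := scaled_exponent_le p1 c0 hL.
have -> : p * (k%:R * (ln n%:R + 1 - ln k%:R) - p * (k%:R * (k%:R - 1) / 2)
       + 2 * ln n.+1%:R) = p * (k%:R * (ln n%:R - ln k%:R)) + c - c ^+ 2 / 2
       + p * c / 2 + 2 * (p * ln n.+1%:R) by rewrite /c; field.
have : p * ln n.+1%:R <= p * ln n%:R + p.
  by rewrite -[X in _ + X]mulr1 -mulrDr ler_wpM2l // ltW.
rewrite hk; lra.
Qed.

Definition search_rate (x : R) : R := (2 * ln x + ln x ^+ 2) / (2 * x).

Lemma T_le_expR (n : nat) (phi : R) : (0 < n)%N -> 0 < phi <= n%:R ->
  2 * expR 4 + 20 <= ln phi -> T n (phi / n%:R) <= expR (n%:R * search_rate phi).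
Proof.
move=> n0 /andP [phi0 phin] hL.
have n0' : (0 : R) < n%:R by rewrite ltr0n.
set p := phi / n%:R; set B := n%:R * search_rate phi.
have p0 : 0 < p by rewrite divr_gt0.
have p1 : p <= 1 by rewrite ler_pdivrMr // mul1r.
have phiE : phi = p * n%:R by rewrite mulfVK ?gt_eqF.
have pB : p * B = ln phi + ln phi ^+ 2 / 2.
  by rewrite /B /search_rate /p; field; rewrite !gt_eqF.
have N0 : (0 : R) < n.+1%:R ^+ 2 by rewrite exprn_gt0 ?ltr0n.
have term (k : nat) : 'C(n, k)%:R * expR (- (p * (k%:R * (k%:R - 1) / 2)))
    <= expR B / n.+1%:R ^+ 2.
  have -> : n.+1%:R ^+ 2 = expR (2 * ln n.+1%:R) :> R by rewrite expRM_natl lnK ?posrE ?ltr0n.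
  rewrite ler_pdivlMr ?expR_gt0 //.
  apply: le_trans (_ : expR (k%:R * (ln n%:R + 1 - ln k%:R)) *
     expR (- (p * (k%:R * (k%:R - 1) / 2))) * expR (2 * ln n.+1%:R) <= _).
    apply: ler_wpM2r; first exact: expR_ge0.
    by apply: ler_wpM2r; [exact: expR_ge0 | exact: binomial_le_expR].
  rewrite -!expRD ler_expR -(ler_pM2l p0) pB phiE.
  by apply: term_exponent_le; rewrite -?phiE ?p0.
apply: le_trans (T_le_binomial_sum _ _) _; first by rewrite ltW.
apply: le_trans (_ : n.+1%:R * \sum_(k < n.+1) expR B / n.+1%:R ^+ 2 <= _).
  by rewrite ler_wpM2l ?ler0n //; apply: ler_sum => k _; apply: term.
rewrite sumr_const card_ord -mulr_natr expr2 le_eqVlt; apply/orP; left.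
by apply/eqP; field; rewrite addrC natr1 pnatr_eq0.
Qed.

Lemma search_rate_le (x : R) : 0 < x -> 1 <= ln x ->
  search_rate x <= 9 / ln x.
Proof.
move=> x0; set L := ln x => L1.
have L0 : 0 < L by lra.
have := @expR_ge1Dxn R L 2 (ltW L0); rewrite /L lnK // -/L => x_ge.
have L2 : L <= L ^+ 2 by rewrite expr2; nra.
rewrite /search_rate -/L ler_pdivrMr ?mulr_gt0 //.
apply: le_trans (_ : 9 / L * (2 * (L ^+ 3 / 3`!%:R)) <= _); last first.
  by rewrite ler_wpM2l ?divr_ge0 ?ltW //; lra.
have -> : 9 / L * (2 * (L ^+ 3 / 3`!%:R)) = 3 * L ^+ 2.
  by rewrite (_ : 3`!%:R = 6 :> R) //; field; rewrite gt_eqF.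
lra.
Qed.

Lemma search_rate_cvg0 (phi : nat -> R) : phi @ \oo --> +oo ->
  (fun n => search_rate (phi n)) @ \oo --> 0.
Proof.
move=> phi_oo; apply/cvgrPdist_le => e e0.
near=> n.
have phi_ge : expR (1 + 9 / e) <= phi n by near: n; exact: cvgry_ge phi_oo _.
have phi0 : 0 < phi n by apply: lt_le_trans phi_ge; exact: expR_gt0.
have lnphi : 1 + 9 / e <= ln (phi n) by rewrite -[leLHS]expRK ler_ln ?posrE ?expR_gt0.
have q0 : 0 <= 9 / e by rewrite divr_ge0 // ltW.
rewrite sub0r normrN ger0_norm.
  apply: le_trans (search_rate_le phi0 _) _; first by lra.
  rewrite ler_pdivrMr; last lra.
  by rewrite mulrC -ler_pdivrMr //; lra.
by apply: divr_ge0; nra.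
Unshelve. all: end_near.
Qed.

End Asymptotics.

Theorem lemma2 (R : realType) (phi : nat -> R)
  (phi_o : (fun n : nat => phi n / n%:R) @ \oo --> 0%R)
  (phi_inf : phi @ \oo --> +oo) :
  let p := fun n : nat => phi n / n%:R in
  (* subexponential: ln T(n,p) / n -> 0 *)
  ((fun n : nat => ln (T n (p n)) / n%:R) @ \oo --> 0%R) /\
  (* big-O bound *)
  (exists C : R, \forall n \near \oo,
     T n (p n) <= C * expR (n%:R * ((2 * ln (phi n) + ln (phi n) ^+ 2) / (2 * phi n)))).
Proof.
move=> p.
have T_bounds : \forall n \near \oo,
    (0 < n)%N /\ 1 <= T n (p n) <= expR (n%:R * search_rate (phi n)).
  near=> n.
  have n0 : (0 < n)%N by near: n; exact: nbhs_infty_gt.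
  have p1 : p n < 1 by near: n; exact: cvgr_lt 0 phi_o 1 ltr01.
  have phi_ge : expR (2 * expR 4 + 20) <= phi n by near: n; exact: cvgry_ge phi_inf _.
  have phi0 : 0 < phi n by apply: lt_le_trans phi_ge; exact: expR_gt0.
  have phi_n : phi n <= n%:R by move: p1; rewrite /p ltr_pdivrMr ?ltr0n // mul1r => /ltW.
  split => //; apply/andP; split.
    by apply: T_ge1; rewrite divr_ge0 ?ler0n ?(ltW phi0) ?(ltW p1).
  apply: T_le_expR; rewrite ?phi0 //.
  by rewrite -[leLHS]expRK ler_ln ?posrE ?expR_gt0.
split; last by exists 1; apply: filterS T_bounds => n [_ /andP[_]]; rewrite mul1r.
apply: (@squeeze_cvgr _ _ _ _ (fun=> 0) (fun n => search_rate (phi n))); last first.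
- exact: search_rate_cvg0.
- by apply/cvgrPdist_le => e e0; apply: nearW => n; rewrite subrr normr0 ltW.
apply: filterS T_bounds => n [n0 /andP[T1 Tle]].
have T0 : 0 < T n (p n) by apply: lt_le_trans T1.
rewrite divr_ge0 ?ln_ge0 ?ler0n //= ler_pdivrMr ?ltr0n // mulrC.
by rewrite -[leRHS]expRK ler_ln ?posrE ?expR_gt0.
Unshelve. all: end_near.
Qed.
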